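(* Let $H_A,H_B$ be complex Hilbert spaces of dimensions $d_A,d_B$. Let $\Pi_{A1},\dots,\Pi_{A\mathfrak a}$ be orthogonal projectors on $H_A$ with $\Pi_{Aa}\Pi_{Ac}=\delta_{ac}\Pi_{Aa}$ and $\sum_a\Pi_{Aa}=\mathbf 1_A$, and $\Pi_{B1},\dots,\Pi_{B\mathfrak b}$ orthogonal projectors on $H_B$ with $\Pi_{Bb}\Pi_{Bd}=\delta_{bd}\Pi_{Bb}$ and $\sum_b\Pi_{Bb}=\mathbf 1_B$. For a unit vector $\ket s\in H_A\otimes H_B$ let $p_{ab}=\bra s(\Pi_{Aa}\otimes\Pi_{Bb})\ket s$ and $\mathcal R_{ab}=\mathrm{rank}(\ket s)-\mathrm{rank}[(\Pi_{Aa}\otimes\Pi_{Bb})\ket s]$. Then $\sum_{a,b}p_{ab}\mathcal R_{ab}\le (d_A+d_B)-\sum_{a,b}p_{ab}\,[\mathrm{Tr}(\Pi_{Aa})+\mathrm{Tr}(\Pi_{Bb})].$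
   Context: The rank of a vector $\ket s\in H_A\otimes H_B$ is its Schmidt rank: the least $n$ such that $\ket s=\sum_{i=1}^n\ket{a_i}\otimes\ket{b_i}$ with $\ket{a_i}\in H_A,\ket{b_i}\in H_B$; the zero vector has rank $0$. *)

(* H_A = C^dA, H_B = C^dB (C = algC); a vector of
   H_A (x) H_B is represented as a dA x dB matrix s, with
   |a> (x) |b>  represented by  a *m b^T  (a, b column vectors), and
   (X (x) Y)|s>  represented by  X *m s *m Y^T. *)
From HB Require Import structures.
From mathcomp Require Import all_boot all_order all_algebra all_field.
Set Implicit Arguments. Unset Strict Implicit. Unset Printing Implicit Defensive.
Import Order.TTheory GRing.Theory Num.Theory.
Local Open Scope ring_scope.

Definition tens (dA dB : nat) (a : 'cV[algC]_dA) (b : 'cV[algC]_dB)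
  : 'M[algC]_(dA, dB) := a *m b^T.

Definition tens_op (dA dB : nat) (X : 'M[algC]_dA) (Y : 'M[algC]_dB)
  (s : 'M[algC]_(dA, dB)) : 'M[algC]_(dA, dB) := X *m s *m Y^T.

Definition tinner (dA dB : nat) (s t : 'M[algC]_(dA, dB)) : algC :=
  \sum_(i < dA) \sum_(j < dB) (s i j)^* * t i j.

Definition decomposable (dA dB : nat) (s : 'M[algC]_(dA, dB)) (n : nat) : Prop :=
  exists (a : 'I_n -> 'cV[algC]_dA) (b : 'I_n -> 'cV[algC]_dB),
    s = \sum_(i < n) tens (a i) (b i).

(* r is the (Schmidt) rank of s: the least n such that s is a sum of n
   elementary tensors (the zero vector has rank 0, as the empty sum). *)
Definition is_schmidt_rank (dA dB : nat) (s : 'M[algC]_(dA, dB)) (r : nat) : Prop :=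
  decomposable s r /\ forall n, decomposable s n -> (r <= n)%N.

Definition adj (d : nat) (X : 'M[algC]_d) : 'M[algC]_d := (map_mx (fun x : algC => x^*) X)^T.

(* The proof has three ingredients.
   - Schmidt rank is matrix rank: a sum of n elementary tensors has rank at
     most n, and a full-rank factorisation of s writes it as a sum of
     rank s elementary tensors.
   - Pointwise bound: for idempotents X, Y, Sylvester's inequality applied
     twice to X s Y^T gives
       rank s - rank (X s Y^T) <= dA + dB - (rank X + rank Y),
     and the trace of an idempotent matrix is its rank.
   - The numbers p_ab = <s|(PA a (x) PB b)|s> equal the squared norms of
     (PA a (x) PB b)|s>, hence are nonnegative, and sum to <s|s> = 1 by the
     completeness relations; averaging the pointwise bound with these
     weights gives the theorem. *)
From HB Require Import structures.
From mathcomp Require Import all_boot all_order all_algebra all_field.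
From mathcomp Require Import zify ring.
Set Implicit Arguments. Unset Strict Implicit. Unset Printing Implicit Defensive.
Import Order.TTheory GRing.Theory Num.Theory.
Local Open Scope ring_scope.

Lemma mxrank_sum_le (F : fieldType) (m n : nat) (I : Type) (r : seq I)
    (P : pred I) (A : I -> 'M[F]_(m, n)) :
  (\rank (\sum_(i <- r | P i) A i)%R <= \sum_(i <- r | P i) \rank (A i))%N.
Proof.
elim/big_rec2: _ => [|i k B _ IH]; first by rewrite mxrank0.
exact: leq_trans (mxrank_add _ _) (leq_add (leqnn _) IH).
Qed.

(* The trace of an idempotent matrix is its rank: factor P = C R through
   its row space; idempotence forces R C = 1, so tr P = tr (R C). *)
Lemma mxtrace_idem (F : fieldType) (n : nat) (P : 'M[F]_n) :
  P *m P = P -> \tr P = (\rank P)%:R.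
Proof.
move=> idP; move: (mulmx_base P) (col_base_full P) (row_base_free P).
move: (col_base P) (row_base P) => C R PCR Cfull Rfree.
have RC1 : R *m C = 1%:M.
  apply: (row_free_inj Rfree); rewrite mul1mx; apply: (row_full_inj Cfull).
  by rewrite !mulmxA PCR -mulmxA PCR idP.
by rewrite -{1}PCR mxtrace_mulC RC1 mxtrace1.
Qed.

(* Sylvester's rank inequality, applied to both products of A B C. *)
Lemma mxrank_mul3 (F : fieldType) (m n p q : nat)
    (A : 'M[F]_(m, n)) (B : 'M[F]_(n, p)) (C : 'M[F]_(p, q)) :
  (\rank A + \rank B + \rank C <= \rank (A *m B *m C) + n + p)%N.
Proof.
by have := mxrank_mul_min A B; have := mxrank_mul_min (A *m B) C; lia.
Qed.

Lemma weighted_bound (R : numDomainType) (I J : finType) (p x y : I -> J -> R) (c : R) :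
  (forall i j, 0 <= p i j) -> \sum_i \sum_j p i j = 1 ->
  (forall i j, x i j <= c - y i j) ->
  \sum_i \sum_j p i j * x i j <= c - \sum_i \sum_j p i j * y i j.
Proof.
move=> p_ge0 p_sum1 xy.
have -> : c = \sum_i \sum_j p i j * c.
  by under eq_bigr do rewrite -mulr_suml; rewrite -mulr_suml p_sum1 mul1r.
rewrite -sumrB; apply: ler_sum => i _; rewrite -sumrB; apply: ler_sum => j _.
by rewrite -mulrBr ler_wpM2l.
Qed.

Section SchmidtRank.
Variables dA dB : nat.
Implicit Types (s : 'M[algC]_(dA, dB)).

Lemma mxrank_tens (a : 'cV[algC]_dA) (b : 'cV[algC]_dB) : (\rank (tens a b) <= 1)%N.
Proof. exact: leq_trans (mxrankM_maxl _ _) (rank_leq_col a). Qed.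

Lemma decomposable_mxrank_le s n : decomposable s n -> (\rank s <= n)%N.
Proof.
case=> a [b ->]; apply: leq_trans (mxrank_sum_le _ _ _) _.
rewrite -[n in (_ <= n)%N]card_ord -sum1_card.
by apply: leq_sum => i _; exact: mxrank_tens.
Qed.

(* Rank-one expansion of the factorisation s = col_base s *m row_base s. *)
Lemma decomposable_mxrank s : decomposable s (\rank s).
Proof.
exists (fun i => col i (col_base s)), (fun i => (row i (row_base s))^T).
rewrite -[LHS]mulmx_base; apply/matrixP => x y.
rewrite !mxE summxE; apply: eq_bigr => i _.
by rewrite /tens trmxK !mxE big_ord1 !mxE.
Qed.

Lemma schmidt_rankE s r : is_schmidt_rank s r -> r = \rank s.
Proof.
case=> dec_r r_min; apply/eqP; rewrite eqn_leq decomposable_mxrank_le //.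
by rewrite andbT; apply: r_min (decomposable_mxrank s).
Qed.

End SchmidtRank.

Section InnerProduct.
Local Open Scope sesquilinear_scope.
Variables dA dB : nat.
Implicit Types (u v s : 'M[algC]_(dA, dB)).

Lemma adj_trmxC d (X : 'M[algC]_d) : adj X = X ^t*.
Proof. by rewrite /adj map_trmx. Qed.

Lemma trmxC_mul m n p (A : 'M[algC]_(m, n)) (B : 'M[algC]_(n, p)) :
  (A *m B) ^t* = B ^t* *m A ^t*.
Proof. by rewrite trmx_mul map_mxM. Qed.

Lemma tinnerE u v : tinner u v = \tr (u ^t* *m v).
Proof.
rewrite /tinner /mxtrace exchange_big; apply: eq_bigr => j _.
by rewrite !mxE; apply: eq_bigr => i _; rewrite !mxE.
Qed.

Lemma tinner_mull u v (X : 'M[algC]_dA) : tinner u (X *m v) = tinner (X ^t* *m u) v.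
Proof. by rewrite !tinnerE trmxC_mul trmxCK mulmxA. Qed.

Lemma tinner_mulr u v (Y : 'M[algC]_dB) : tinner u (v *m Y) = tinner (u *m Y ^t*) v.
Proof. by rewrite !tinnerE trmxC_mul trmxCK mulmxA mxtrace_mulC mulmxA. Qed.

Lemma tinner_ge0 u : 0 <= tinner u u.
Proof.
by apply: sumr_ge0 => i _; apply: sumr_ge0 => j _; rewrite mulrC mul_conjC_ge0.
Qed.

Lemma tinner_sumr (I : Type) (r : seq I) (P : pred I) u (v : I -> 'M[algC]_(dA, dB)) :
  tinner u (\sum_(i <- r | P i) v i) = \sum_(i <- r | P i) tinner u (v i).
Proof. by rewrite tinnerE mulmx_sumr raddf_sum; apply: eq_bigr => i _; rewrite tinnerE. Qed.

(* For orthogonal projectors, <s|(X (x) Y)s> is the squared norm of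
   (X (x) Y)s: X (x) Y is self-adjoint and idempotent. *)
Lemma tinner_proj s (X : 'M[algC]_dA) (Y : 'M[algC]_dB) :
  adj X = X -> X *m X = X -> adj Y = Y -> Y *m Y = Y ->
  tinner s (tens_op X Y s) = tinner (tens_op X Y s) (tens_op X Y s).
Proof.
rewrite !adj_trmxC /tens_op => Xh Xi Yh Yi.
have YTi : Y^T *m Y^T = Y^T by rewrite -trmx_mul Yi.
have YTh : (Y^T) ^t* = Y^T by rewrite -map_trmx Yh.
have idXY : X *m s *m Y^T = X *m (X *m s *m Y^T *m Y^T).
  by rewrite -!mulmxA YTi !mulmxA Xi.
by rewrite {1}idXY tinner_mull tinner_mulr Xh YTh.
Qed.
End InnerProduct.

Section LocalOperators.
Variables dA dB : nat.

Lemma tens_op_sum (I J : finType) (X : I -> 'M[algC]_dA) (Y : J -> 'M[algC]_dB)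
    (s : 'M[algC]_(dA, dB)) :
  \sum_i \sum_j tens_op (X i) (Y j) s = tens_op (\sum_i X i) (\sum_j Y j) s.
Proof.
rewrite /tens_op linear_sum /= !mulmx_suml; apply: eq_bigr => i _.
by rewrite mulmx_sumr.
Qed.

Lemma tens_op1 (s : 'M[algC]_(dA, dB)) : tens_op 1%:M 1%:M s = s.
Proof. by rewrite /tens_op trmx1 mulmx1 mul1mx. Qed.

Lemma rank_deficit_le (X : 'M[algC]_dA) (Y : 'M[algC]_dB) (s : 'M[algC]_(dA, dB)) :
  X *m X = X -> Y *m Y = Y ->
  (\rank s)%:R - (\rank (tens_op X Y s))%:R <= (dA + dB)%:R - (\tr X + \tr Y) :> algC.
Proof.
move=> Xi Yi; rewrite (mxtrace_idem Xi) (mxtrace_idem Yi).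
have sylv := mxrank_mul3 X s Y^T; rewrite mxrank_tr -/(tens_op X Y s) in sylv.
rewrite -subr_ge0; set t := tens_op X Y s.
have -> : (dA + dB)%:R - ((\rank X)%:R + (\rank Y)%:R) - ((\rank s)%:R - (\rank t)%:R)
    = (\rank t + dA + dB - (\rank X + \rank s + \rank Y))%N%:R :> algC.
  by rewrite natrB // !natrD; ring.
exact: ler0n.
Qed.
End LocalOperators.

Theorem mainTheorem11 (dA dB na nb : nat)
  (PA : 'I_na -> 'M[algC]_dA) (PB : 'I_nb -> 'M[algC]_dB)
  (hPAh : forall a, adj (PA a) = PA a)
  (hPAo : forall a c, PA a *m PA c = if a == c then PA a else 0)
  (hPA1 : \sum_(a < na) PA a = 1%:M)
  (hPBh : forall b, adj (PB b) = PB b)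
  (hPBo : forall b d, PB b *m PB d = if b == d then PB b else 0)
  (hPB1 : \sum_(b < nb) PB b = 1%:M)
  (s : 'M[algC]_(dA, dB)) (hs : tinner s s = 1)
  (r : nat) (hr : is_schmidt_rank s r)
  (rab : 'I_na -> 'I_nb -> nat)
  (hrab : forall a b, is_schmidt_rank (tens_op (PA a) (PB b) s) (rab a b)) :
  let p a b := tinner s (tens_op (PA a) (PB b) s) in
  \sum_(a < na) \sum_(b < nb) p a b * ((r%:R : algC) - (rab a b)%:R)
    <= (dA + dB)%:R
       - \sum_(a < na) \sum_(b < nb) p a b * (\tr (PA a) + \tr (PB b)).
Proof.
cbv zeta beta.
have PAi a : PA a *m PA a = PA a by rewrite hPAo eqxx.
have PBi b : PB b *m PB b = PB b by rewrite hPBo eqxx.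
apply: weighted_bound => [a b | | a b].
- by rewrite tinner_proj ?tinner_ge0.
- rewrite -hs; transitivity (tinner s (tens_op (\sum_a PA a) (\sum_b PB b) s)).
    by rewrite -tens_op_sum tinner_sumr; apply: eq_bigr => a _; rewrite tinner_sumr.
  by rewrite hPA1 hPB1 tens_op1.
- by rewrite (schmidt_rankE hr) (schmidt_rankE (hrab a b)) rank_deficit_le.
Qed.
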